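(* $\mathcal{FCOM}^{S}_{\mathcal{F.V.}} > \mathcal{FCOM}^{S}_{\mathcal{L.V.}}$, i.e. the model $\mathcal{FCOM}$ under the semi-synchronous scheduler with full visibility is computationally more powerful than the model $\mathcal{FCOM}$ under the semi-synchronous scheduler with limited visibility.
   Context: Robots are anonymous, identical, autonomous computational entities viewed as points moving in the Euclidean plane. Each has its own local coordinate system, with no agreement between robots and no common chirality, and perceives itself at its origin. Robots operate in Look-Compute-Move cycles. In Look a robot takes an instantaneous snapshot of the positions (and visible lights, if any) of the robots it can see. In Compute it runs the common algorithm on the snapshot to obtain a destination. In Move it moves there. Models: - $\mathcal{OBLOT}$: robots are oblivious (no memory of previous cycles) and silent (no means of communication). - $\mathcal{LUMI}$: each robot carries a persistent light whose color is taken from a finite set and is set at the end of Compute; the light is visible to the robot itself and to the other robots. - $\mathcal{FSTA}$: the light is internal, visible only to its owner. It acts as a finite persistent state; there is no communication. - $\mathcal{FCOM}$: the light is visible only to the other robots. A robot does not see its own light and is otherwise oblivious. Schedulers: time is divided into rounds. Under the semi-synchronous scheduler $S$ (SSYNCH), in each round an adversarially chosen set of robots is activated and they perform one full cycle in perfect synchronization; every robot is activated infinitely often. Under the fully synchronous scheduler $F$ (FSYNCH), every robot is activated in every round. Visibility: - Full visibility $\mathcal{F.V.}$: every robot sees all robots. - Limited visibility $\mathcal{L.V.}$: a robot sees only the robots within a fixed distance $V_r$ of its current position, with $V_r$ the same for all robots. The visibility graph (robots adjacent iff they see each other) of the initial configuration is assumed connected. Relations: $\mathcal{M}^X_V$ denotes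 model $\mathcal{M}$ under scheduler $X$ with visibility $V$. For a team $R$ of robots, $Task(\mathcal{M},X,V;R)$ is the set of problems (tasks where robots must form some configuration(s) subject to conditions) solvable by $R$ in that setting. $\mathcal{R}$ is the set of all teams, and $\mathcal{R}_n$ the set of teams of size $n$. - $\mathcal{M}^{X_1}_{V_1} \ge \mathcal{N}^{X_2}_{V_2}$ if for all $R\in\mathcal{R}$, $Task(\mathcal{M},X_1,V_1;R)\supseteq Task(\mathcal{N},X_2,V_2;R)$. - $>$ means $\ge$ holds and there exists $R\in\mathcal{R}$ with $Task(\mathcal{M},X_1,V_1;R)\setminus Task(\mathcal{N},X_2,V_2;R)\neq\emptyset$. - $\perp$ (incomparable) means there exist $R_1,R_2\in\mathcal{R}$ with $Task(\mathcal{M},X_1,V_1;R_1)\setminus Task(\mathcal{N},X_2,V_2;R_1)\neq\emptyset$ and $Task(\mathcal{N},X_2,V_2;R_2)\setminus Task(\mathcal{M},X_1,V_1;R_2)\neq\emptyset$. *)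

From Stdlib Require Import Reals List Permutation Relations.
From mathcomp Require Import ssreflect ssrbool ssrfun eqtype ssrnat seq choice fintype.

Definition point : Type := (R * R)%type.

Definition sqdist (p q : point) : R :=
  ((fst p - fst q) * (fst p - fst q) + (snd p - snd q) * (snd p - snd q))%R.

Record team := Team { tn : nat; tV : R; tV_pos : (0 < tV)%R }.

Inductive visibility := FV | LV.

(** A local coordinate system: an orthogonal 2x2 matrix [[a b];[c d]]
    (arbitrary rotation, possibly a reflection: no agreement on axes and no
    common chirality); the robot is at the origin of its own system. *)
Record frame := Frame { fa : R; fb : R; fc : R; fd : R }.

Definition orthogonal (M : frame) : Prop :=
  (fa M * fa M + fc M * fc M = 1 /\ fb M * fb M + fd M * fd M = 1 /\
   fa M * fb M + fc M * fd M = 0)%R.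

Definition to_local (p : point) (M : frame) (q : point) : point :=
  let x := (fst q - fst p)%R in let y := (snd q - snd p)%R in
  ((fa M * x + fc M * y)%R, (fb M * x + fd M * y)%R).

Definition to_global (p : point) (M : frame) (v : point) : point :=
  ((fst p + (fa M * fst v + fb M * snd v))%R,
   (snd p + (fc M * fst v + fd M * snd v))%R).

Definition sees (Vr : R) (v : visibility) (p q : point) : bool :=
  match v with
  | FV => true
  | LV => if Rle_dec (sqdist p q) (Vr * Vr)%R then true else false
  end.

(** FCOM snapshot of robot i: positions (in its local frame) and lights of the
    OTHER robots it can see; its own light is not visible to itself. *)
Definition snapshot (T : team) (v : visibility) (M : 'I_(tn T) -> frame)
  (pos : 'I_(tn T) -> point) (col : 'I_(tn T) -> nat) (i : 'I_(tn T))
  : list (point * nat) :=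
  map (fun j => (to_local (pos i) (M i) (pos j), col j))
      (filter (fun j => (j != i) && sees (tV T) v (pos i) (pos j)) (enum 'I_(tn T))).

(** An FCOM algorithm: maps a snapshot to (local destination, new light colour). *)
Definition algorithm := list (point * nat) -> point * nat.

(** Semi-synchronous execution: in round t the robots with [act t i = true]
    perform one full Look-Compute-Move cycle in perfect synchronisation
    (rigid moves); lights are all initially colour 0. *)
Fixpoint exec (T : team) (v : visibility) (A : algorithm)
  (M : 'I_(tn T) -> frame) (act : nat -> 'I_(tn T) -> bool)
  (p0 : 'I_(tn T) -> point) (t : nat)
  : ('I_(tn T) -> point) * ('I_(tn T) -> nat) :=
  match t with
  | 0 => (p0, fun _ => 0%nat)
  | S t' =>
      let (pos, col) := exec T v A M act p0 t' in
      (fun i => if act t' i then to_global (pos i) (M i) (fst (A (snapshot T v M pos col i)))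
                else pos i,
       fun i => if act t' i then snd (A (snapshot T v M pos col i)) else col i)
  end.

Definition fair (n : nat) (act : nat -> 'I_n -> bool) : Prop :=
  forall (i : 'I_n) (t : nat), exists t', (t <= t')%nat /\ act t' i = true.

Definition vis_adj (T : team) (p : 'I_(tn T) -> point) (i j : 'I_(tn T)) : Prop :=
  i <> j /\ (sqdist (p i) (p j) <= tV T * tV T)%R.

Definition valid_init (T : team) (p : 'I_(tn T) -> point) : Prop :=
  (forall i j, p i = p j -> i = j) /\
  (forall i j, clos_refl_trans _ (vis_adj T p) i j).

(** A problem for a team T: a set of admissible executions, i.e. of sequences
    of configurations (the robots' positions in a global frame over time). *)
Definition problem (T : team) := (nat -> 'I_(tn T) -> point) -> Prop.

Definition solvable (v : visibility) (T : team) (P : problem T) : Prop :=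
  exists (k : nat) (A : algorithm),
    (0 < k)%nat /\
    (forall s, (snd (A s) < k)%nat) /\
    (forall s s', Permutation s s' -> A s = A s') /\   (* anonymity *)
    forall (M : 'I_(tn T) -> frame) (act : nat -> 'I_(tn T) -> bool)
           (p0 : 'I_(tn T) -> point),
      (forall i, orthogonal (M i)) -> fair (tn T) act -> valid_init T p0 ->
      P (fun t => fst (exec T v A M act p0 t)).

Definition Task (v : visibility) (T : team) : problem T -> Prop := solvable v T.

Definition model_ge (v1 v2 : visibility) : Prop :=
  forall (T : team) (P : problem T), Task v2 T P -> Task v1 T P.

Definition model_gt (v1 v2 : visibility) : Prop :=
  model_ge v1 v2 /\
  exists (T : team) (P : problem T), Task v1 T P /\ ~ Task v2 T P.

From Stdlib Require Import Reals Lra Permutation Relations FunctionalExtensionality Classical.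
From mathcomp Require Import ssreflect ssrbool ssrfun eqtype ssrnat seq fintype.

(* Full visibility simulates limited visibility: a robot discards from its
   snapshot every robot farther than V_r, which it can decide in its own frame
   because frames are isometries.

   For strictness, consider the problem "every robot either stays or moves to
   the centroid of the current configuration, and the configuration eventually
   changes".  With full visibility a robot computes the centroid from the
   local positions it sees (its own being the origin), and since positions are
   distinct some robot is not at the centroid.  With limited visibility, take
   A(-3,4), B(0,0), C(5,0) and D(8,4) or D(8,-4) with V_r = 5: only
   consecutive robots of the chain A-B-C-D see each other.  Mirroring the
   frames of C and D makes both configurations look the same to every robot,
   so under the synchronous scheduler every robot computes the same local
   destination in both.  But every robot sees the two centroids (5/2,2) and
   (5/2,0) at different local positions, so staying put is the only move
   allowed in both executions, and the configuration never changes. *)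

Local Open Scope R_scope.

Lemma orthogonal_rows (M : frame) : orthogonal M ->
  fa M * fa M + fb M * fb M = 1 /\ fc M * fc M + fd M * fd M = 1 /\
  fa M * fc M + fb M * fd M = 0.
Proof.
case: M => a b c d; rewrite /orthogonal /= => -[col1 [col2 col12]].
have bc : b * b = c * c.
  transitivity ((a * b) * (a * b) + b * b * (c * c) + b * b * (1 - (a * a + c * c)));
    first ring.
  replace (a * b) with (- (c * d)) by lra; rewrite col1.
  transitivity (c * c * (b * b + d * d)); [ring | rewrite col2; ring].
split; [lra | split; [lra | apply: Rsqr_0_uniq]].
transitivity (c * c * ((a * a + c * c) - (b * b + d * d)) + (c * c + d * d) * (b * b - c * c)
              + 2 * (c * d) * (a * b + c * d)); first (rewrite /Rsqr; ring).
by rewrite col1 col2 col12 bc; ring.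
Qed.

Lemma to_local_self (p : point) (M : frame) : to_local p M p = (0, 0).
Proof. by rewrite /to_local; f_equal; ring. Qed.

Lemma to_global_origin (p : point) (M : frame) : to_global p M (0, 0) = p.
Proof. by case: p => x y; rewrite /to_global /=; f_equal; ring. Qed.

Lemma to_local_to_global (p v : point) (M : frame) : orthogonal M ->
  to_local p M (to_global p M v) = v.
Proof.
case: M v => a b c d [x y]; rewrite /orthogonal /to_local /to_global /= => -[col1 [col2 col12]].
f_equal.
- transitivity ((a * a + c * c) * x + (a * b + c * d) * y); [ring | rewrite col1 col12; ring].
- transitivity ((a * b + c * d) * x + (b * b + d * d) * y); [ring | rewrite col2 col12; ring].
Qed.

Lemma to_global_to_local (p q : point) (M : frame) : orthogonal M ->
  to_global p M (to_local p M q) = q.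
Proof.
move=> /orthogonal_rows; case: M q => a b c d [x y] /= [row1 [row2 row12]].
rewrite /to_local /to_global /=; f_equal.
- transitivity (fst p + (a * a + b * b) * (x - fst p) + (a * c + b * d) * (y - snd p)); first ring.
  by rewrite row1 row12; ring.
- transitivity (snd p + (a * c + b * d) * (x - fst p) + (c * c + d * d) * (y - snd p)); first ring.
  by rewrite row2 row12; ring.
Qed.

Lemma to_global_eq_iff (p q v : point) (M : frame) : orthogonal M ->
  to_global p M v = q <-> v = to_local p M q.
Proof.
move=> orthM; split=> [<- | ->]; last exact: to_global_to_local.
by rewrite to_local_to_global.
Qed.

Lemma sqdist_to_local (p q : point) (M : frame) : orthogonal M ->
  sqdist (0, 0) (to_local p M q) = sqdist p q.
Proof.
move=> /orthogonal_rows; case: M => a b c d /= [row1 [row2 row12]].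
rewrite /sqdist /to_local /=.
set x := fst q - fst p; set y := snd q - snd p.
transitivity ((a * a + b * b) * (x * x) + 2 * (a * c + b * d) * (x * y)
              + (c * c + d * d) * (y * y)); first ring.
by rewrite row1 row2 row12 /x /y; ring.
Qed.

Lemma Permutation_filter {T : Type} (g : pred T) (s s' : seq T) :
  Permutation s s' -> Permutation (filter g s) (filter g s').
Proof.
elim=> //= [x l l' _ IH | x y l | l l' l'' _ IH1 _ IH2].
- by case: (g x) => //; constructor.
- by case: (g x); case: (g y); try constructor; reflexivity.
- exact: Permutation_trans IH1 IH2.
Qed.

Lemma exec_pos_succ (T : team) v A M act p0 t i :
  fst (exec T v A M act p0 t.+1) i =
  if act t i then
    to_global (fst (exec T v A M act p0 t) i) (M i)
      (fst (A (snapshot T v M (fst (exec T v A M act p0 t)) (snd (exec T v A M act p0 t)) i)))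
  else fst (exec T v A M act p0 t) i.
Proof. by rewrite /=; case: (exec T v A M act p0 t). Qed.

Lemma exec_col_succ (T : team) v A M act p0 t i :
  snd (exec T v A M act p0 t.+1) i =
  if act t i then
    snd (A (snapshot T v M (fst (exec T v A M act p0 t)) (snd (exec T v A M act p0 t)) i))
  else snd (exec T v A M act p0 t) i.
Proof. by rewrite /=; case: (exec T v A M act p0 t). Qed.

Definition within_range (Vr : R) (s : list (point * nat)) : list (point * nat) :=
  filter (fun e => sees Vr LV (0, 0) (fst e)) s.

Lemma within_range_snapshot (T : team) M pos col i : orthogonal (M i) ->
  within_range (tV T) (snapshot T FV M pos col i) = snapshot T LV M pos col i.
Proof.
move=> orthM; rewrite /within_range /snapshot filter_map -filter_predI.
congr map; apply: eq_filter => j /=.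
by rewrite /sees sqdist_to_local // andbT andbC.
Qed.

Lemma exec_within_range (T : team) A M act p0 t : (forall i, orthogonal (M i)) ->
  exec T FV (fun s => A (within_range (tV T) s)) M act p0 t = exec T LV A M act p0 t.
Proof.
move=> orthM; elim: t => //= t ->.
case: (exec T LV A M act p0 t) => pos col.
by f_equal; apply: functional_extensionality => i; rewrite within_range_snapshot.
Qed.

Lemma model_ge_FV_LV : model_ge FV LV.
Proof.
move=> T P [k [A [k_gt0 [A_col [A_anon solves]]]]].
exists k, (fun s => A (within_range (tV T) s)); do 3!split => //.
- by move=> s s' ss'; apply: A_anon; apply: Permutation_filter.
- move=> M act p0 orthM fair_act init.
  suff -> : (fun t => fst (exec T FV (fun s => A (within_range (tV T) s)) M act p0 t))
           = (fun t => fst (exec T LV A M act p0 t)) by exact: solves.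
  by apply: functional_extensionality => t; rewrite exec_within_range.
Qed.

Definition sumR {I : Type} (f : I -> R) (s : seq I) : R :=
  foldr (fun i acc => f i + acc) 0 s.

Lemma sumR_perm {I : Type} (f : I -> R) (s s' : seq I) :
  Permutation s s' -> sumR f s = sumR f s'.
Proof. by elim=> //= [x l l' _ -> | x y l | l l' l'' _ -> _ ->] //; ring. Qed.

Lemma sumR_map {I J : Type} (f : J -> R) (g : I -> J) (s : seq I) :
  sumR f (map g s) = sumR (fun i => f (g i)) s.
Proof. by elim: s => //= x s ->. Qed.

Lemma sumR_filter {I : Type} (P : pred I) (f : I -> R) (s : seq I) :
  (forall x, ~~ P x -> f x = 0) -> sumR f (filter P s) = sumR f s.
Proof.
move=> f0; elim: s => //= x s IH; case Px: (P x) => /=; rewrite IH //.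
by rewrite f0 ?Px //; ring.
Qed.

Lemma sumR_affine {I : Type} (a c x y : R) (f g : I -> R) (s : seq I) :
  sumR (fun i => a * (f i - x) + c * (g i - y)) s =
  a * (sumR f s - INR (size s) * x) + c * (sumR g s - INR (size s) * y).
Proof.
elim: s => [|i s IH]; first by rewrite /=; ring.
by rewrite [size _]/= S_INR /= IH; ring.
Qed.

Definition centroid {n : nat} (q : 'I_n -> point) : point :=
  (sumR (fun j => fst (q j)) (enum 'I_n) / INR n,
   sumR (fun j => snd (q j)) (enum 'I_n) / INR n).

(* The robot itself sits at the origin of its frame, so dividing the sum of the
   other robots' local positions by the team size gives the local centroid. *)
Definition centroid_alg (n : nat) : algorithm := fun s =>
  ((sumR (fun e => fst (fst e)) s / INR n, sumR (fun e => snd (fst e)) s / INR n), 0%nat).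

Lemma centroid_alg_local (T : team) M pos col i :
  fst (centroid_alg (tn T) (snapshot T FV M pos col i)) = to_local (pos i) (M i) (centroid pos).
Proof.
have n_neq0 : INR (tn T) <> 0.
  by apply/not_0_INR/eqP; rewrite -lt0n; apply: leq_ltn_trans (leq0n i) (ltn_ord i).
have self0 j : ~~ ((j != i) && sees (tV T) FV (pos i) (pos j)) ->
    to_local (pos i) (M i) (pos j) = (0, 0).
  by rewrite andbT negbK => /eqP ->; apply: to_local_self.
rewrite /centroid_alg /snapshot !sumR_map.
rewrite !(sumR_filter (fun j => (j != i) && sees (tV T) FV (pos i) (pos j)));
  try by move=> j /self0 ->.
rewrite /to_local /= !sumR_affine size_enum_ord.
by f_equal; field.
Qed.

Definition centroid_moves {n : nat} (traj : nat -> 'I_n -> point) : Prop :=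
  forall t i, traj t.+1 i = traj t i \/ traj t.+1 i = centroid (traj t).

Definition centroid_problem (T : team) : problem T := fun traj =>
  centroid_moves traj /\ exists t, traj t <> traj 0%nat.

Lemma exists_off_centroid {n : nat} (q : 'I_n -> point) :
  (1 < n)%N -> injective q -> exists i, q i <> centroid q.
Proof.
move=> n_gt1 q_inj; apply: NNPP => all_at_centroid.
have at_centroid := not_ex_not_all _ _ all_at_centroid.
pose i0 := Ordinal (ltnW n_gt1); pose i1 := Ordinal n_gt1.
have /(congr1 val) // : i0 = i1.
by apply: q_inj; rewrite !at_centroid.
Qed.

Lemma exec_centroid_alg_succ (T : team) M act p0 t i : (forall i, orthogonal (M i)) ->
  fst (exec T FV (centroid_alg (tn T)) M act p0 t.+1) i =
  if act t i then centroid (fst (exec T FV (centroid_alg (tn T)) M act p0 t))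
  else fst (exec T FV (centroid_alg (tn T)) M act p0 t) i.
Proof.
by move=> orthM; rewrite exec_pos_succ centroid_alg_local to_global_to_local.
Qed.

Lemma centroid_problem_FV_solvable (T : team) :
  (1 < tn T)%N -> Task FV T (centroid_problem T).
Proof.
move=> n_gt1; exists 1%nat, (centroid_alg (tn T)); do 3!split => //.
  by move=> s s' ss'; rewrite /centroid_alg !(sumR_perm _ _ _ ss').
move=> M act p0 orthM fair_act [p0_inj _].
set traj := fun t => fst (exec T FV (centroid_alg (tn T)) M act p0 t).
have step t i : traj t.+1 i = if act t i then centroid (traj t) else traj t i.
  exact: exec_centroid_alg_succ.
split=> [t i | ]; first by rewrite step; case: (act t i); [right | left].
apply: NNPP => frozen.
have traj_p0 t : traj t = p0.
  by apply: NNPP => moved; apply: frozen; exists t.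
have [i off] := exists_off_centroid p0 n_gt1 p0_inj.
have [t [_ act_ti]] := fair_act i 0%nat.
by apply: off; move: (step t i); rewrite act_ti !traj_p0.
Qed.

Lemma frames_force_stay (p1 p2 c1 c2 w : point) (M1 M2 : frame) :
  orthogonal M1 -> orthogonal M2 -> to_local p1 M1 c1 <> to_local p2 M2 c2 ->
  to_global p1 M1 w = p1 \/ to_global p1 M1 w = c1 ->
  to_global p2 M2 w = p2 \/ to_global p2 M2 w = c2 ->
  w = (0, 0).
Proof.
move=> orth1 orth2 views_differ.
rewrite !to_global_eq_iff // !to_local_self.
by case=> [// | ->]; case=> [// | w2]; case: views_differ.
Qed.

Definition synchronous (n : nat) : nat -> 'I_n -> bool := fun _ _ => true.

Lemma synchronous_fair (n : nat) : fair n (synchronous n).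
Proof. by move=> i t; exists t. Qed.

Section Indistinguishable.

Variables (T : team) (v : visibility) (A : algorithm).
Variables (M1 M2 : 'I_(tn T) -> frame) (p1 p2 : 'I_(tn T) -> point).
Hypotheses (orth1 : forall i, orthogonal (M1 i)) (orth2 : forall i, orthogonal (M2 i)).
Hypothesis same_view : forall col i, snapshot T v M1 p1 col i = snapshot T v M2 p2 col i.
Hypothesis centroid_views_differ :
  forall i, to_local (p1 i) (M1 i) (centroid p1) <> to_local (p2 i) (M2 i) (centroid p2).

Let exec1 := exec T v A M1 (synchronous (tn T)) p1.
Let exec2 := exec T v A M2 (synchronous (tn T)) p2.

Lemma synchronous_centroid_moves_frozen :
  centroid_moves (fun t => fst (exec1 t)) -> centroid_moves (fun t => fst (exec2 t)) ->
  forall t, fst (exec1 t) = p1 /\ fst (exec2 t) = p2 /\ snd (exec1 t) = snd (exec2 t).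
Proof.
move=> moves1 moves2; elim=> [// | t [pos1 [pos2 col12]]].
set w := fun i => fst (A (snapshot T v M2 p2 (snd (exec2 t)) i)).
have next1 i : fst (exec1 t.+1) i = to_global (p1 i) (M1 i) (w i).
  by rewrite /exec1 exec_pos_succ -/exec1 pos1 col12 same_view.
have next2 i : fst (exec2 t.+1) i = to_global (p2 i) (M2 i) (w i).
  by rewrite /exec2 exec_pos_succ -/exec2 pos2.
have stay i : w i = (0, 0).
  apply: frames_force_stay (orth1 i) (orth2 i) (centroid_views_differ i) _ _.
  - by move: (moves1 t i); cbv beta; rewrite next1 pos1.
  - by move: (moves2 t i); cbv beta; rewrite next2 pos2.
split; [|split]; apply: functional_extensionality => i.
- by rewrite next1 stay to_global_origin.
- by rewrite next2 stay to_global_origin.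
- by rewrite /exec1 /exec2 !exec_col_succ -/exec1 -/exec2 pos1 pos2 col12 same_view.
Qed.

End Indistinguishable.

Definition T4 : team := Team 4 5 ltac:(lra).

Definition o0 : 'I_4 := @Ordinal 4 0 isT.
Definition o1 : 'I_4 := @Ordinal 4 1 isT.
Definition o2 : 'I_4 := @Ordinal 4 2 isT.
Definition o3 : 'I_4 := @Ordinal 4 3 isT.

Lemma enum_ord4 : enum 'I_4 = [:: o0; o1; o2; o3].
Proof. by apply: (inj_map val_inj); rewrite val_enum_ord. Qed.

Lemma ord4P (i : 'I_4) : i = o0 \/ i = o1 \/ i = o2 \/ i = o3.
Proof.
have : i \in enum 'I_4 by rewrite mem_enum.
by rewrite enum_ord4 !inE => /orP[/eqP-> | /orP[/eqP-> | /orP[/eqP-> | /eqP->]]]; tauto.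
Qed.

Definition kite (dy : R) (i : 'I_4) : point :=
  match val i with 0 => (-3, 4) | 1 => (0, 0) | 2 => (5, 0) | _ => (8, dy) end.

Definition frame_id : frame := Frame 1 0 0 1.
Definition frame_mirror : frame := Frame 1 0 0 (-1).
Definition mirror_CD (i : 'I_4) : frame := if (val i < 2)%N then frame_id else frame_mirror.

Lemma orthogonal_frame_id : orthogonal frame_id.
Proof. rewrite /orthogonal /=; lra. Qed.

Lemma orthogonal_mirror_CD i : orthogonal (mirror_CD i).
Proof. by rewrite /mirror_CD /orthogonal; case: ifP => _ /=; lra. Qed.

Lemma vis_adj_sym {T : team} {p : 'I_(tn T) -> point} {i j} :
  vis_adj T p i j -> vis_adj T p j i.
Proof.
rewrite /vis_adj /sqdist => -[ij d_ij]; split; first by move=> ji; apply: ij.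
lra.
Qed.

Lemma chain4_connected (p : 'I_4 -> point) :
  vis_adj T4 p o0 o1 -> vis_adj T4 p o1 o2 -> vis_adj T4 p o2 o3 ->
  forall i j, clos_refl_trans _ (vis_adj T4 p) i j.
Proof.
move=> a01 a12 a23.
have a10 := vis_adj_sym a01; have a21 := vis_adj_sym a12; have a32 := vis_adj_sym a23.
have to0 i : clos_refl_trans _ (vis_adj T4 p) i o0.
  case: (ord4P i) => [-> | [-> | [-> | ->]]]; first exact: rt_refl.
  - exact: rt_step.
  - exact: rt_trans (rt_step _ _ _ _ a21) (rt_step _ _ _ _ a10).
  - apply: rt_trans (rt_step _ _ _ _ a32) _.
    exact: rt_trans (rt_step _ _ _ _ a21) (rt_step _ _ _ _ a10).
have from0 j : clos_refl_trans _ (vis_adj T4 p) o0 j.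
  case: (ord4P j) => [-> | [-> | [-> | ->]]]; first exact: rt_refl.
  - exact: rt_step.
  - exact: rt_trans (rt_step _ _ _ _ a01) (rt_step _ _ _ _ a12).
  - apply: rt_trans (rt_step _ _ _ _ a01) _.
    exact: rt_trans (rt_step _ _ _ _ a12) (rt_step _ _ _ _ a23).
by move=> i j; apply: rt_trans (to0 i) (from0 j).
Qed.

Lemma kite_valid (dy : R) : dy * dy <= 16 -> valid_init T4 (kite dy).
Proof.
move=> dy_le; split.
- move=> i j; case: (ord4P i) => [-> | [-> | [-> | ->]]];
  case: (ord4P j) => [-> | [-> | [-> | ->]]] //=; rewrite /kite /=; case=> *; lra.
- by apply: chain4_connected; split=> //; rewrite /sqdist /=; lra.
Qed.

Ltac decide_Rle :=
  repeat match goal with |- context [Rle_dec ?x ?y] =>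
    let h := fresh in
    destruct (Rle_dec x y) as [h | h]; try (exfalso; unfold sqdist in h; simpl in h; lra)
  end.

Ltac eq_views :=
  repeat match goal with
  | |- cons _ _ = cons _ _ => f_equal
  | |- pair _ _ = pair _ _ => f_equal
  | |- @eq R _ _ => lra
  end.

Lemma kite_same_view col i :
  snapshot T4 LV (fun=> frame_id) (kite 4) col i = snapshot T4 LV mirror_CD (kite (-4)) col i.
Proof.
rewrite /snapshot enum_ord4.
case: (ord4P i) => [-> | [-> | [-> | ->]]]; rewrite /= /kite /=; decide_Rle;
  rewrite /= /to_local /=; eq_views.
Qed.

Lemma centroid_kite (dy : R) : centroid (kite dy) = (5 / 2, (4 + dy) / 4).
Proof. by rewrite /centroid enum_ord4 /=; f_equal; field. Qed.

Lemma kite_centroid_views_differ i :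
  to_local (kite 4 i) frame_id (centroid (kite 4)) <>
  to_local (kite (-4) i) (mirror_CD i) (centroid (kite (-4))).
Proof.
rewrite !centroid_kite.
by case: (ord4P i) => [-> | [-> | [-> | ->]]]; rewrite /to_local /= => -[_]; lra.
Qed.

Lemma centroid_problem_LV_unsolvable : ~ Task LV T4 (centroid_problem T4).
Proof.
case=> k [A [_ [_ [_ solves]]]].
have [moves1 [t moved]] := solves (fun=> frame_id) (synchronous 4) (kite 4)
  (fun=> orthogonal_frame_id) (synchronous_fair 4) (kite_valid 4 ltac:(lra)).
have [moves2 _] := solves mirror_CD (synchronous 4) (kite (-4))
  orthogonal_mirror_CD (synchronous_fair 4) (kite_valid (-4) ltac:(lra)).
have [frozen _] := synchronous_centroid_moves_frozen T4 LV A _ _ _ _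
  (fun=> orthogonal_frame_id) orthogonal_mirror_CD kite_same_view kite_centroid_views_differ
  moves1 moves2 t.
by apply: moved; rewrite frozen.
Qed.

Theorem theorem6 : model_gt FV LV.
Proof.
split; first exact: model_ge_FV_LV.
exists T4, (centroid_problem T4); split.
- exact: centroid_problem_FV_solvable.
- exact: centroid_problem_LV_unsolvable.
Qed.
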